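(* Consider the following transition system (an abstract model of a counting network with one balancer and two counters). A state consists of a bit $b \in \{0,1\}$, natural numbers $n_0, n_1$, finite sets $\tau^0, \tau^1$ of tokens (natural numbers), and two finite maps (''histories'') $H^0, H^1$ from natural numbers to pairs $(\hat\iota, z)$ where $\hat\iota$ is a finite set of tokens and $z$ is a token. Write $\mathsf{spent}(H)$ for the set of second components $z$ of entries of $H$, and $\tau = \tau^0 \cup \tau^1$. The initial state is $b = 0$, $n_0 = 0$, $n_1 = 1$, $\tau^0 = \tau^1 = \emptyset$, $H^0 = \{0 \mapsto (\{0\}, 0)\}$, $H^1 = \{1 \mapsto (\{1\}, 1)\}$. The transitions are: (Flip) choose a token $z \notin \tau^0 \cup \tau^1 \cup \mathsf{spent}(H^0) \cup \mathsf{spent}(H^1)$, add $z$ to $\tau^{b}$, and set $b := 1 - b$; (Increment) for $i \in \{0,1\}$ and a token $z \in \tau^i$: add the entry $(n_i + 2) \mapsto (\tau^0 \cup \tau^1, z)$ to $H^i$ (the set $\tau^0 \cup \tau^1$ taken before removing $z$), remove $z$ from $\tau^i$, and set $n_i := n_i + 2$. Then every state reachable from the initial state by finitely many transitions satisfies: (1) $|H^0| + |\tau^0| = |H^1| + |\tau^1| + b$; (2) $\mathrm{dom}\,H^0 = \{0, 2, 4, \dots, n_0\}$ and $\mathrm{dom}\,H^1 = \{1, 3, 5, \dots, n_1\}$; (3) the sets $\tau^0$, $\tau^1$, $\mathsf{spent}(H^0) \cup \mathsf{spent}(H^1)$ are pairwise disjoint; (4) for every entry $t \mapsto (\hat\iota,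 z)$ of $H^0$ or $H^1$, $z \in \hat\iota$; (5) for every entry $t \mapsto (\hat\iota, z)$ of $H^0$: $t + 2|\hat\iota \cap \tau^0| < n_1 + 2|\hat\iota \cap \tau^1| + 2$; and for every entry $t \mapsto (\hat\iota, z)$ of $H^1$: $t + 2|\hat\iota \cap \tau^1| < n_0 + 2|\hat\iota \cap \tau^0| + 2$.
   Context: $|S|$ denotes the cardinality of a finite set or the number of entries of a finite map $S$. Tokens are natural numbers. The model corresponds to a counter implementation in which a balancer bit $b$ directs each incrementing thread to counter $c_0$ (holding even values $n_0$) or $c_1$ (holding odd values $n_1$); a ''flip'' issues a token for the counter indicated by the old value of $b$, and an ''increment'' spends such a token to add 2 to that counter, recording the new value together with a snapshot of the currently outstanding tokens. *)

From mathcomp Require Import all_boot.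
Set Implicit Arguments. Unset Strict Implicit. Unset Printing Implicit Defensive.

(* Finite sets of tokens are represented by sequences; membership is \in,
   cardinality is the number of distinct elements. *)
Definition tset := seq nat.
Definition tcard (s : tset) : nat := size (undup s).
Definition tinter (s t : tset) : tset := [seq x <- s | x \in t].

(* A history is a finite map nat -> (tset * nat), represented as an
   association list whose keys are kept distinct by [hadd] (update). *)
Definition history := seq (nat * (tset * nat)).
Definition hdom (H : history) : seq nat := map fst H.
Definition hcard (H : history) : nat := size (undup (hdom H)).
Definition spent (H : history) : seq nat := map (fun e => e.2.2) H.
Definition hadd (k : nat) (v : tset * nat) (H : history) : history :=
  (k, v) :: [seq e <- H | e.1 != k].

Record state := State {
  st_b : bool;            (* false = 0, true = 1 *)
  st_n0 : nat; st_n1 : nat;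
  st_tau0 : tset; st_tau1 : tset;
  st_H0 : history; st_H1 : history }.

Definition init_state : state :=
  State false 0 1 [::] [::] [:: (0, ([:: 0], 0))] [:: (1, ([:: 1], 1))].

Inductive step : state -> state -> Prop :=
| step_flip b n0 n1 t0 t1 H0 H1 z :
    z \notin t0 -> z \notin t1 -> z \notin spent H0 -> z \notin spent H1 ->
    step (State b n0 n1 t0 t1 H0 H1)
         (if b then State (~~ b) n0 n1 t0 (z :: t1) H0 H1
               else State (~~ b) n0 n1 (z :: t0) t1 H0 H1)
| step_inc0 b n0 n1 t0 t1 H0 H1 z :
    z \in t0 ->
    step (State b n0 n1 t0 t1 H0 H1)
         (State b n0.+2 n1 [seq x <- t0 | x != z] t1
                (hadd n0.+2 (t0 ++ t1, z) H0) H1)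
| step_inc1 b n0 n1 t0 t1 H0 H1 z :
    z \in t1 ->
    step (State b n0 n1 t0 t1 H0 H1)
         (State b n0 n1.+2 t0 [seq x <- t1 | x != z]
                H0 (hadd n1.+2 (t0 ++ t1, z) H1)).

Inductive reachable : state -> Prop :=
| reach_init : reachable init_state
| reach_step s s' : reachable s -> step s s' -> reachable s'.

From mathcomp Require Import all_boot zify.

Set Implicit Arguments.
Unset Strict Implicit.
Unset Printing Implicit Defensive.

(* The five properties are not inductive by themselves.  They become so once
   the token sets are tied to the counters by
   [n0 + 2|tau0| + 1 = n1 + 2|tau1| + 2b], which yields (5) for the entry
   created by an increment, and once every snapshot is known to mention only
   outstanding or spent tokens, which makes the token issued by a flip
   invisible to all existing snapshots.  Exchanging the two counters and
   negating [b] preserves this invariant and turns a flip from [b = 1] into a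
   flip from [b = 0] and an increment of [c1] into one of [c0] (with the
   snapshot listed in the other order), so only those two steps are checked;
   the parity of [n0], which breaks the symmetry, is tracked separately. *)
Lemma eq_tcard (s1 s2 : tset) : s1 =i s2 -> tcard s1 = tcard s2.
Proof.
move=> eq_s; apply/perm_size/uniq_perm; rewrite ?undup_uniq // => x.
by rewrite !mem_undup.
Qed.

Lemma tcard_uniq (s : tset) : uniq s -> tcard s = size s.
Proof. by move=> s_uniq; rewrite /tcard undup_id. Qed.

Lemma subset_leq_tcard (s1 s2 : tset) : {subset s1 <= s2} -> tcard s1 <= tcard s2.
Proof.
move=> sub; apply: uniq_leq_size; first exact: undup_uniq.
by move=> x; rewrite !mem_undup; apply: sub.
Qed.

Lemma tcard_cons z (s : tset) : tcard (z :: s) <= (tcard s).+1.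
Proof. by rewrite /tcard /=; case: ifP. Qed.

Lemma tcard_tinter_id (iota s : tset) :
  {subset s <= iota} -> tcard (tinter iota s) = tcard s.
Proof.
by move=> sub; apply: eq_tcard => x; rewrite mem_filter; apply/andb_idr/sub.
Qed.

Lemma tinter_consN (iota s : tset) z :
  z \notin iota -> tinter iota (z :: s) = tinter iota s.
Proof.
move=> z_iota; apply: eq_in_filter => x x_iota; rewrite inE.
by case: eqP x_iota z_iota => // -> ->.
Qed.

Lemma leq_tcard_tinter (iota s1 s2 : tset) :
  {subset s1 <= s2} -> tcard (tinter iota s1) <= tcard (tinter iota s2).
Proof.
by move=> sub; apply: subset_leq_tcard => x; rewrite !mem_filter => /andP[/sub -> ->].
Qed.

Lemma tcard_tinter_rem (iota s : tset) z :
  tcard (tinter iota s) <= (tcard (tinter iota [seq x <- s | x != z])).+1.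
Proof.
apply: leq_trans (tcard_cons z _); apply: subset_leq_tcard => x.
by rewrite inE !mem_filter; case: eqP => //= _ /andP[-> ->].
Qed.

Lemma hadd_fresh k v (H : history) :
  k \notin hdom H -> hadd k v H = (k, v) :: H.
Proof.
move=> k_fresh; rewrite /hadd; congr cons; apply/all_filterP/allP => e e_H.
by apply: contraNneq k_fresh => <-; apply: map_f.
Qed.

Lemma hcard_cons k v (H : history) :
  k \notin hdom H -> hcard ((k, v) :: H) = (hcard H).+1.
Proof. by move=> k_fresh; rewrite /hcard /= (negbTE k_fresh). Qed.

Lemma spent_cons e (H : history) : spent (e :: H) = e.2.2 :: spent H.
Proof. by []. Qed.

Record counter_inv (b : bool) n0 n1 (t0 t1 : tset) (H0 H1 : history) : Prop := {
  inv_uniq0 : uniq t0;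
  inv_uniq1 : uniq t1;
  inv_size : n0 + 2 * size t0 + 1 = n1 + 2 * size t1 + 2 * b;
  inv_hcard0 : hcard H0 = n0./2.+1;
  inv_hcard1 : hcard H1 = n1./2.+1;
  inv_dom0 : forall t, (t \in hdom H0) = (odd t == odd n0) && (t <= n0);
  inv_dom1 : forall t, (t \in hdom H1) = (odd t == odd n1) && (t <= n1);
  inv_disj : forall z, z \in t0 -> z \notin t1;
  inv_unspent0 : forall z, z \in t0 -> z \notin spent H0 ++ spent H1;
  inv_unspent1 : forall z, z \in t1 -> z \notin spent H0 ++ spent H1;
  inv_spent_mem : forall t iota z, (t, (iota, z)) \in H0 ++ H1 -> z \in iota;
  inv_snapshot : forall t iota z, (t, (iota, z)) \in H0 ++ H1 ->
    {subset iota <= t0 ++ t1 ++ spent H0 ++ spent H1};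
  inv_bound0 : forall t iota z, (t, (iota, z)) \in H0 ->
    t + 2 * tcard (tinter iota t0) < n1 + 2 * tcard (tinter iota t1) + 2;
  inv_bound1 : forall t iota z, (t, (iota, z)) \in H1 ->
    t + 2 * tcard (tinter iota t1) < n0 + 2 * tcard (tinter iota t0) + 2 }.

Lemma counter_inv_mirror b n0 n1 t0 t1 H0 H1 :
  counter_inv b n0 n1 t0 t1 H0 H1 -> counter_inv (~~ b) n1 n0 t1 t0 H1 H0.
Proof.
case=> u0 u1 sz hc0 hc1 dom0 dom1 disj un0 un1 mem snap bnd0 bnd1.
split=> //.
- by case: b sz => /=; lia.
- by move=> z z_t1; apply: contraL z_t1; apply: disj.
- by move=> z /un1; rewrite !mem_cat orbC.
- by move=> z /un0; rewrite !mem_cat orbC.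
- by move=> t iota z; rewrite mem_cat orbC -mem_cat; apply: mem.
- move=> t iota z; rewrite mem_cat orbC -mem_cat => /snap sub x /sub.
  by rewrite !mem_cat => /or4P[] ->; rewrite ?orbT.
Qed.

Definition state_inv (s : state) : Prop :=
  let: State b n0 n1 t0 t1 H0 H1 := s in counter_inv b n0 n1 t0 t1 H0 H1.

Lemma state_inv_init : state_inv init_state.
Proof.
split=> //= [t|t|t iota z|t iota z|t iota z|t iota z]; rewrite ?inE.
- by apply/eqP/idP; lia.
- by apply/eqP/idP; lia.
- by case/orP=> /eqP[_ -> ->]; rewrite inE.
- by case/orP=> /eqP[_ -> _] x; rewrite inE => /eqP ->; rewrite !inE ?orbT.
- by case/eqP=> -> -> _.
- by case/eqP=> -> -> _.
Qed.

Lemma counter_inv_flip n0 n1 t0 t1 H0 H1 z :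
  counter_inv false n0 n1 t0 t1 H0 H1 ->
  z \notin t0 -> z \notin t1 -> z \notin spent H0 -> z \notin spent H1 ->
  counter_inv true n0 n1 (z :: t0) t1 H0 H1.
Proof.
case=> u0 u1 sz hc0 hc1 dom0 dom1 disj un0 un1 mem snap bnd0 bnd1 z_t0 z_t1 z_s0 z_s1.
have fresh t iota z' s : (t, (iota, z')) \in H0 ++ H1 ->
    tinter iota (z :: s) = tinter iota s.
  move=> /snap sub; apply/tinter_consN/negP => /sub.
  by rewrite !mem_cat (negbTE z_t0) (negbTE z_t1) (negbTE z_s0) (negbTE z_s1).
split=> //=.
- by rewrite z_t0.
- lia.
- by move=> x; rewrite inE => /orP[/eqP ->|/disj].
- by move=> x; rewrite inE => /orP[/eqP ->|/un0] //; rewrite mem_cat negb_or z_s0.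
- by move=> t iota z' /snap sub x /sub; rewrite inE => ->; rewrite orbT.
- by move=> t iota z' e; rewrite (fresh t iota z') ?mem_cat ?e //; apply: bnd0 e.
- by move=> t iota z' e; rewrite (fresh t iota z') ?mem_cat ?e ?orbT //; apply: bnd1 e.
Qed.

Lemma counter_inv_inc b n0 n1 t0 t1 H0 H1 iota z :
  counter_inv b n0 n1 t0 t1 H0 H1 -> z \in t0 -> iota =i t0 ++ t1 ->
  counter_inv b n0.+2 n1 [seq x <- t0 | x != z] t1 (hadd n0.+2 (iota, z) H0) H1.
Proof.
case=> u0 u1 sz hc0 hc1 dom0 dom1 disj un0 un1 mem snap bnd0 bnd1 z_t0 iotaE.
set t0' := [seq x <- t0 | x != z].
have key_fresh : n0.+2 \notin hdom H0 by rewrite dom0; lia.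
rewrite hadd_fresh //.
have t0'_sub : {subset t0' <= t0} by move=> x; rewrite mem_filter => /andP[].
have size_t0' : size t0' = (size t0).-1 by rewrite /t0' -rem_filter // size_rem.
have t0_pos : 0 < size t0 by case: (t0) z_t0.
have z_t1 : z \notin t1 := disj z z_t0.
have snap' : {subset t0 ++ t1 ++ spent H0 ++ spent H1 <=
                     t0' ++ t1 ++ spent ((n0.+2, (iota, z)) :: H0) ++ spent H1}.
  move=> x; rewrite spent_cons !mem_cat in_cons mem_filter.
  by case: eqVneq => [->|_] /=; [rewrite !orbT | case/or4P=> ->; rewrite ?orbT].
split=> //.
- exact: filter_uniq.
- rewrite size_t0'; lia.
- by rewrite hcard_cons // hc0.
- by move=> t; rewrite /= inE dom0; apply/idP/idP; lia.
- by move=> x /t0'_sub/disj.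
- move=> x; rewrite mem_filter => /andP[x_z /un0].
  by rewrite spent_cons mem_cat in_cons (negbTE x_z) -mem_cat.
- move=> x x_t1; have x_z : x != z by apply: contraNneq z_t1 => <-.
  by rewrite spent_cons mem_cat in_cons (negbTE x_z) -mem_cat un1.
- move=> t iota' z'; rewrite /= inE => /orP[/eqP[_ -> ->] | /mem //].
  by rewrite iotaE mem_cat z_t0.
- move=> t iota' z'; rewrite /= inE => /orP[/eqP[_ -> _] x | /snap sub x /sub/snap' //].
  by rewrite iotaE => x_t; apply/snap'; rewrite catA mem_cat x_t.
- move=> t iota' z'; rewrite inE => /orP[/eqP[-> -> _] | e]; last first.
    have := bnd0 t iota' z' e; have := leq_tcard_tinter iota' t0'_sub; lia.
  have t0'_iota : {subset t0' <= iota}.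
    by move=> x /t0'_sub x_t0; rewrite iotaE mem_cat x_t0.
  have t1_iota : {subset t1 <= iota} by move=> x x_t1; rewrite iotaE mem_cat x_t1 orbT.
  rewrite (tcard_tinter_id t0'_iota) (tcard_tinter_id t1_iota).
  rewrite !tcard_uniq ?filter_uniq // size_t0'; case: b sz => /=; lia.
- move=> t iota' z' e; have := bnd1 t iota' z' e; have := tcard_tinter_rem iota' t0 z.
  rewrite -/t0'; lia.
Qed.

Lemma state_inv_step s s' : state_inv s -> step s s' -> state_inv s'.
Proof.
move=> inv_s st; case: st inv_s => [[] n0 n1 t0 t1 H0 H1 z z_t0 z_t1 z_s0 z_s1
  | b n0 n1 t0 t1 H0 H1 z z_t0 | b n0 n1 t0 t1 H0 H1 z z_t1] /= inv_s.
- exact: counter_inv_mirror (counter_inv_flip (counter_inv_mirror inv_s) z_t1 z_t0 z_s1 z_s0).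
- exact: counter_inv_flip.
- exact: counter_inv_inc.
- have iotaE : t0 ++ t1 =i t1 ++ t0 by move=> x; rewrite !mem_cat orbC.
  by have := counter_inv_mirror (counter_inv_inc (counter_inv_mirror inv_s) z_t1 iotaE);
    rewrite negbK.
Qed.

Lemma state_inv_reachable s : reachable s -> state_inv s.
Proof.
elim=> [|s1 s2 _ inv_s1]; first exact: state_inv_init.
exact: state_inv_step.
Qed.

Lemma reachable_n0_even s : reachable s -> ~~ odd (st_n0 s).
Proof. by elim=> // s1 s2 _ + st; case: st => [[]|b n0|] //=; rewrite negbK. Qed.

Theorem mainTheorem4 (s : state) :
  reachable s ->
  let b := st_b s in
  let n0 := st_n0 s in let n1 := st_n1 s in
  let t0 := st_tau0 s in let t1 := st_tau1 s in
  let H0 := st_H0 s in let H1 := st_H1 s in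
  [/\ hcard H0 + tcard t0 = hcard H1 + tcard t1 + b,
      (~~ odd n0 /\ forall t, (t \in hdom H0) = (~~ odd t) && (t <= n0)) /\
      (odd n1 /\ forall t, (t \in hdom H1) = odd t && (t <= n1)),
      [/\ forall z, z \in t0 -> z \notin t1,
          forall z, z \in t0 -> z \notin spent H0 ++ spent H1
        & forall z, z \in t1 -> z \notin spent H0 ++ spent H1],
      forall t iota z, (t, (iota, z)) \in H0 ++ H1 -> z \in iota
    & (forall t iota z, (t, (iota, z)) \in H0 ->
         t + 2 * tcard (tinter iota t0) < n1 + 2 * tcard (tinter iota t1) + 2) /\
      (forall t iota z, (t, (iota, z)) \in H1 ->
         t + 2 * tcard (tinter iota t1) < n0 + 2 * tcard (tinter iota t0) + 2)].
Proof.
move=> reach_s; have := reachable_n0_even reach_s; have := state_inv_reachable reach_s.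
case: s {reach_s} => b n0 n1 t0 t1 H0 H1 /=.
case=> u0 u1 sz hc0 hc1 dom0 dom1 disj un0 un1 mem _ bnd0 bnd1 n0_even.
have n1_odd : odd n1 by move: sz n0_even; case: b => /=; lia.
rewrite !tcard_uniq //; split=> //.
- by rewrite hc0 hc1; move: sz n0_even n1_odd; lia.
- by split; split=> // t; rewrite ?dom0 ?dom1 ?(negbTE n0_even) ?n1_odd ?eqbF_neg ?eqb_id.
Qed.
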